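(* For a set $\Psi\subseteq\mathcal{K}$, let $EE^*_\Psi$ denote the optimal value of problem (P2$_\Psi$) (defined in the context) with $x_k=1$ for $k\in\Psi$ and $x_k=0$ for $k\notin\Psi$, and for each $m\in\mathcal{K}$ let $EE^*_m$ denote the optimal value of the trading-EE problem (T) for MU $m$. Let $m\in\mathcal{K}\setminus\Psi$. Say that serving MU $m$ improves the EE of the SC if $EE^*_{\Psi\cup\{m\}}>EE^*_\Psi$. Then: (1) if constraints C1 and C4 are both removed from (P2), serving MU $m$ improves the EE of the SC if and only if $EE^*_m>EE^*_\Psi$; (2) if constraint C1 is removed from (P2) (C4 kept), serving MU $m$ improves the EE of the SC if $EE^*_m>EE^*_\Psi$; (3) if constraint C4 is removed from (P2) (C1 kept), serving MU $m$ improves the EE of the SC only if $EE^*_m>EE^*_\Psi$.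
   Context: Setting: $\mathcal{K}=\{1,\dots,K\}$ macro users (MUs), $\mathcal{N}=\{1,\dots,N\}$ small-cell users (SUs). Constants: $N_0>0$, $\xi\in(0,1]$, $P_{\rm c}>0$, $P^{SC}_{\max}>0$, $R^{SC}_{\min}\ge0$; for each $k$: $W^k_{MC}>0$, $R^k_{MC}>0$, $h_k>0$, $g_{k,n}>0$ ($n\in\mathcal{N}$); for each $n$: $B^n_{SC}>0$, $g_n>0$. Let $k'\in\arg\max_{n}g_{k,n}$. Let $\rho(b,p,g)=b\log_2(1+\frac{pg}{bN_0})$ ($=0$ if $b=0$). Problem (P2$_\Psi$): with $x_k=\mathbf 1[k\in\Psi]$, maximize over $p_n\ge0$, $p_{k,k'}\ge0$, $b_{k,k'}\ge0$, $q_k\ge0$, $w_k\ge0$ $$\frac{\sum_{n}\rho(B^n_{SC},p_n,g_n)+\sum_{k}x_k\rho(b_{k,k'},p_{k,k'},g_{k,k'})}{\sum_n\frac{p_n}{\xi}+\sum_kx_k\frac{p_{k,k'}}{\xi}+\sum_kx_k\frac{q_k}{\xi}+P_{\rm c}}$$ subject to C1: $\sum_np_n+\sum_kp_{k,k'}+\sum_kq_k\le P^{SC}_{\max}$; C2: $b_{k,k'}+w_k=x_kW^k_{MC}$ for all $k$; C3: $\rho(w_k,q_k,h_k)=x_kR^k_{MC}$ for all $k$; C4: $\sum_n\rho(B^n_{SC},p_n,g_n)+\sum_kx_k\rho(b_{k,k'},p_{k,k'},g_{k,k'})\ge R^{SC}_{\min}$. Problem (T) for MU $m$: maximize over $p_{m,m'}\ge0$,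 $b_{m,m'}\ge0$, $q_m\ge0$, $w_m\ge0$ the ratio $\frac{\rho(b_{m,m'},p_{m,m'},g_{m,m'})}{p_{m,m'}/\xi+q_m/\xi}$ subject to $b_{m,m'}+w_m\le W^m_{MC}$ and $\rho(w_m,q_m,h_m)\ge R^m_{MC}$ (no total power or minimum system rate constraint). *)

From HB Require Import structures.
From mathcomp Require Import all_boot all_order all_algebra.
From mathcomp Require Import all_classical all_reals all_analysis.
Set Implicit Arguments. Unset Strict Implicit. Unset Printing Implicit Defensive.
Import Order.TTheory GRing.Theory Num.Theory.
Local Open Scope classical_set_scope.
Local Open Scope ring_scope.

Definition rho {R : realType} (N0 b p g : R) : R :=
  if b == 0 then 0 else b * (ln (1 + p * g / (b * N0)) / ln 2).

(* System constants: K macro users ('I_K), N small-cell users ('I_N). *)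
Record sys (R : realType) (K N : nat) := Sys {
  N0 : R; xi : R; Pc : R; Pmax : R; Rmin : R;
  WMC : 'I_K -> R; RMC : 'I_K -> R; hk : 'I_K -> R;
  gkn : 'I_K -> 'I_N -> R;
  BSC : 'I_N -> R; gn : 'I_N -> R;
  kp : 'I_K -> 'I_N  (* k' : a chosen element of argmax_n g_{k,n} *) }.

Definition well_formed {R : realType} {K N : nat} (s : sys R K N) : Prop :=
  [/\ 0 < N0 s, 0 < xi s /\ xi s <= 1, 0 < Pc s, 0 < Pmax s & 0 <= Rmin s] /\
  (forall k, [/\ 0 < WMC s k, 0 < RMC s k, 0 < hk s k,
                 (forall n, 0 < gkn s k n) & (forall n, gkn s k n <= gkn s k (kp s k))]) /\
  (forall n, 0 < BSC s n /\ 0 < gn s n).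

Section P2.
Variables (R : realType) (K N : nat) (s : sys R K N).

Definition xind (Psi : {set 'I_K}) (k : 'I_K) : R := (k \in Psi)%:R.

(* total SC rate (numerator of P2, left side of C4) *)
Definition sc_rate (Psi : {set 'I_K}) (p : 'I_N -> R) (pk bk : 'I_K -> R) : R :=
  \sum_n rho (N0 s) (BSC s n) (p n) (gn s n)
  + \sum_k xind Psi k * rho (N0 s) (bk k) (pk k) (gkn s k (kp s k)).

Definition sc_power (Psi : {set 'I_K}) (p : 'I_N -> R) (pk qk : 'I_K -> R) : R :=
  \sum_n p n / xi s + \sum_k xind Psi k * (pk k / xi s)
  + \sum_k xind Psi k * (qk k / xi s) + Pc s.

(* feasibility for (P2_Psi); c1 / c4 say whether C1 / C4 are kept *)
Definition P2_feasible (c1 c4 : bool) (Psi : {set 'I_K})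
    (p : 'I_N -> R) (pk bk qk wk : 'I_K -> R) : Prop :=
  (forall n, 0 <= p n) /\
  (forall k, [/\ 0 <= pk k, 0 <= bk k, 0 <= qk k & 0 <= wk k]) /\
  (c1 -> \sum_n p n + \sum_k pk k + \sum_k qk k <= Pmax s) /\
  (forall k, bk k + wk k = xind Psi k * WMC s k) /\
  (forall k, rho (N0 s) (wk k) (qk k) (hk s k) = xind Psi k * RMC s k) /\
  (c4 -> Rmin s <= sc_rate Psi p pk bk).

(* optimal value EE*_Psi of (P2_Psi): supremum of the objective over the
   feasible set, in the extended reals (-oo if infeasible) *)
Definition EE_P2 (c1 c4 : bool) (Psi : {set 'I_K}) : \bar R :=
  ereal_sup [set y : \bar R | exists p pk bk qk wk,
     P2_feasible c1 c4 Psi p pk bk qk wk /\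
     y = (sc_rate Psi p pk bk / sc_power Psi p pk qk)%:E].

Definition EE_T (m : 'I_K) : \bar R :=
  ereal_sup [set y : \bar R | exists p b q w : R,
     [/\ 0 <= p, 0 <= b, 0 <= q & 0 <= w] /\
     b + w <= WMC s m /\ RMC s m <= rho (N0 s) w q (hk s m) /\
     y = (rho (N0 s) b p (gkn s m (kp s m)) / (p / xi s + q / xi s))%:E].

End P2.

(* The optimal value of each problem is the supremum of rate/power over the
   feasible points, viewed as pairs (rate, power).  Without C4, every feasible
   point for Psi + m is the sum of a feasible point for Psi and a feasible
   point of the trading problem (T) for m, and the mediant (A + a) / (B + c)
   never exceeds the larger of A / B and a / c: this gives (3) and the "only
   if" part of (1).  Conversely, without C1, a tight point of (T) with ratio
   a / c > EE*_Psi can be added to every feasible point for Psi.  The rate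
   grows only logarithmically in the powers, so the near-optimal points for
   Psi have bounded power B; there A > (EE*_Psi - eta) B with eta B small, and
   the mediant exceeds EE*_Psi: this gives (2) and the "if" part of (1). *)

From HB Require Import structures.
From mathcomp Require Import all_boot all_order all_algebra.
From mathcomp Require Import all_classical all_reals all_analysis.
From mathcomp Require Import lra ring.
Import Order.TTheory GRing.Theory Num.Theory.
Set Implicit Arguments. Unset Strict Implicit.
Local Open Scope ring_scope.

Section Rate.
Variable R : realType.

Lemma ln2_gt0 : 0 < ln (2 : R).
Proof. by apply: ln_gt0; rewrite ltr1n. Qed.

Lemma ln_le_subr1 (x : R) : 0 < x -> ln x <= x - 1.
Proof. by move=> x0; have := @le_ln1Dx R (x - 1); rewrite addrCA subrr addr0; apply; lra. Qed.

Lemma subr_inv_le_ln (x : R) : 0 < x -> 1 - x^-1 <= ln x.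
Proof.
move=> x0; have := @ln_le_subr1 x^-1; rewrite invr_gt0 lnV ?posrE // => /(_ x0).
lra.
Qed.

Lemma ln_le_tangent (M y : R) : 0 < M -> 0 < y -> ln y <= ln M + (y / M - 1).
Proof.
move=> M0 y0; have -> : ln y = ln M + ln (y / M).
  by rewrite -lnM ?posrE ?divr_gt0 // mulrC divfK ?gt_eqF.
by rewrite lerD2l ln_le_subr1 ?divr_gt0.
Qed.

Lemma rho_b0 (N0 p g : R) : rho N0 0 p g = 0.
Proof. by rewrite /rho eqxx. Qed.

Lemma rho_p0 (N0 b g : R) : rho N0 b 0 g = 0.
Proof. by rewrite /rho; case: eqP => // _; rewrite !mul0r addr0 ln1 mul0r mulr0. Qed.

Lemma rhoE (N0 b p g : R) : 0 < b -> rho N0 b p g = b * (ln (1 + p * g / (b * N0)) / ln 2).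
Proof. by move=> b0; rewrite /rho gt_eqF. Qed.

Lemma rho_ge0 (N0 b p g : R) : 0 < N0 -> 0 <= b -> 0 <= p -> 0 <= g -> 0 <= rho N0 b p g.
Proof.
move=> N00 b0 p0 g0; rewrite /rho; case: eqP => // /eqP bn0.
have b_gt0 : 0 < b by rewrite lt0r bn0.
apply: mulr_ge0 => //; apply: divr_ge0; last exact: ltW ln2_gt0.
by apply: ln_ge0; rewrite lerDl; apply: divr_ge0; apply: mulr_ge0 => //; apply: ltW.
Qed.

(* With [z_i = 1 + c / b_i], the bounds [ln z1 <= ln z2 + (z1 / z2 - 1)] and
   [1 - 1 / z2 <= ln z2] combine into [b1 ln z1 <= b2 ln z2]. *)
Lemma rho_le_band (N0 b1 b2 p g : R) : 0 < N0 -> 0 <= b1 -> b1 <= b2 -> 0 <= p -> 0 <= g ->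
  rho N0 b1 p g <= rho N0 b2 p g.
Proof.
move=> N00 b10 b12 p0 g0; have [->|/eqP b1n0] := eqVneq b1 0.
  by rewrite rho_b0; apply: rho_ge0 => //; lra.
have b1p : 0 < b1 by lra.
have b2p : 0 < b2 by lra.
rewrite !rhoE //.
set c := p * g / N0.
have c0 : 0 <= c by apply: divr_ge0 => //; [exact: mulr_ge0 | lra].
have -> : p * g / (b1 * N0) = c / b1 by rewrite /c; field; lra.
have -> : p * g / (b2 * N0) = c / b2 by rewrite /c; field; lra.
set z1 := 1 + c / b1; set z2 := 1 + c / b2.
have z1p : 0 < z1 by have := divr_ge0 c0 (ltW b1p); rewrite /z1; lra.
have z2p : 0 < z2 by have := divr_ge0 c0 (ltW b2p); rewrite /z2; lra.
have ln_z1 := ln_le_tangent z2p z1p.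
have ln_z2 := subr_inv_le_ln z2p.
have shift : b1 * (z1 / z2 - 1) = (b2 - b1) * (1 - z2^-1).
  by rewrite /z1 /z2; field; lra.
have := ln2_gt0; rewrite !mulrA => ln2p; apply: ler_wpM2r; first by rewrite invr_ge0; lra.
have : b1 * ln z1 <= b1 * (ln z2 + (z1 / z2 - 1)) by apply: ler_wpM2l; lra.
have : (b2 - b1) * (1 - z2^-1) <= (b2 - b1) * ln z2 by apply: ler_wpM2l; lra.
nra.
Qed.

Definition min_power (N0 w r h : R) : R := w * N0 / h * (expR (r * ln 2 / w) - 1).

Lemma rho_min_power (N0 w r h : R) : 0 < N0 -> 0 < w -> 0 < h ->
  rho N0 w (min_power N0 w r h) h = r.
Proof.
move=> N00 w0 h0; rewrite rhoE // /min_power.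
have -> : 1 + w * N0 / h * (expR (r * ln 2 / w) - 1) * h / (w * N0)
    = expR (r * ln 2 / w) by field; lra.
by have := ln2_gt0; rewrite expRK => ?; field; lra.
Qed.

Lemma min_power_ge0 (N0 w r h : R) : 0 < N0 -> 0 < w -> 0 < h -> 0 <= r ->
  0 <= min_power N0 w r h.
Proof.
move=> N00 w0 h0 r0; apply: mulr_ge0; first by apply: divr_ge0; [apply: mulr_ge0|]; lra.
have : 0 <= r * ln 2 / w by apply: divr_ge0; [apply: mulr_ge0 => //; exact: ltW ln2_gt0|lra].
by have := expR_ge1Dx (r * ln 2 / w); lra.
Qed.

Lemma min_power_le (N0 w r h q : R) : 0 < N0 -> 0 < w -> 0 < h -> 0 <= q ->
  r <= rho N0 w q h -> min_power N0 w r h <= q.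
Proof.
move=> N00 w0 h0 q0; rewrite rhoE // => r_le; have ln2p := @ln2_gt0.
set x := q * h / (w * N0) in r_le.
have x0 : 0 <= x by apply: divr_ge0; apply: mulr_ge0; lra.
have : r * ln 2 / w <= ln (1 + x).
  rewrite ler_pdivrMr //; have -> : ln (1 + x) * w = w * (ln (1 + x) / ln 2) * ln 2.
    by field; lra.
  by rewrite ler_pM2r.
rewrite -ler_expR lnK ?posrE; last lra.
have -> : q = w * N0 / h * x by rewrite /x; field; lra.
move=> ?; apply: ler_wpM2l; last lra.
by apply: divr_ge0; [apply: mulr_ge0|]; lra.
Qed.

Definition rate_offset (N0 eps g : R) : R := ln (1 + g / (N0 * ln 2 * eps)) / ln 2.

Lemma rate_offset_ge0 (N0 eps g : R) : 0 < N0 -> 0 < eps -> 0 <= g ->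
  0 <= rate_offset N0 eps g.
Proof.
move=> N00 eps0 g0; apply: divr_ge0; last exact: ltW ln2_gt0.
apply: ln_ge0; rewrite lerDl; apply: divr_ge0 => //.
by apply: mulr_ge0; [apply: mulr_ge0|]; [lra|exact: ltW ln2_gt0|lra].
Qed.

(* The tangent to [ln] at [M = 1 + g / (N0 ln 2 eps)] has slope small enough
   to be absorbed by [eps * p]. *)
Lemma rho_le_linear (N0 b p g eps : R) : 0 < N0 -> 0 <= b -> 0 <= p -> 0 < g -> 0 < eps ->
  rho N0 b p g <= eps * p + b * rate_offset N0 eps g.
Proof.
move=> N00 b0 p0 g0 eps0; have ln2p := @ln2_gt0.
have [->|/eqP bn0] := eqVneq b 0.
  by rewrite rho_b0 mul0r addr0; apply: mulr_ge0; lra.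
have {b0 bn0}b0 : 0 < b by lra.
rewrite rhoE // /rate_offset.
set x := p * g / (b * N0); set M := 1 + g / (N0 * ln 2 * eps).
have x0 : 0 <= x by apply: divr_ge0; apply: mulr_ge0; lra.
have M1 : 1 <= M.
  by rewrite /M lerDl; apply: divr_ge0; [lra|apply: mulr_ge0; [apply: mulr_ge0|]; lra].
have tangent : ln (1 + x) <= ln M + x / M.
  have M0 : 0 < M by lra.
  have := @ln_le_tangent M (1 + x) M0 ltac:(lra); rewrite mulrDl.
  have : 1 / M <= 1 by rewrite ler_pdivrMr // mul1r.
  lra.
have slope : g / (N0 * M * ln 2) <= eps.
  rewrite ler_pdivrMr; last by apply: mulr_gt0; [apply: mulr_gt0|]; lra.
  have -> : eps * (N0 * M * ln 2) = eps * N0 * ln 2 + g by rewrite /M; field; lra.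
  have : 0 <= eps * N0 * ln 2 by apply: mulr_ge0; [apply: mulr_ge0|]; lra.
  lra.
have -> : eps * p + b * (ln M / ln 2)
    = b * ((ln M + x / M) / ln 2) + p * (eps - g / (N0 * M * ln 2)).
  by rewrite /x; field; lra.
have : 0 <= p * (eps - g / (N0 * M * ln 2)) by apply: mulr_ge0; lra.
suff : b * (ln (1 + x) / ln 2) <= b * ((ln M + x / M) / ln 2) by lra.
by apply: ler_wpM2l; [lra|apply: ler_wpM2r; [rewrite invr_ge0; lra|]].
Qed.

End Rate.

Section RatioSup.
Variable R : realType.

Definition ratio_sup (S : set (R * R)) : \bar R := ereal_sup [set (x.1 / x.2)%:E | x in S].

Definition sublinear (S : set (R * R)) : Prop :=
  forall eps, 0 < eps -> exists C, forall x, S x -> x.1 <= eps * x.2 + C.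

Lemma ratio_sup_ub (S : set (R * R)) x : S x -> ((x.1 / x.2)%:E <= ratio_sup S)%E.
Proof. by move=> Sx; apply: ereal_sup_ubound; exists x. Qed.

Lemma mediant_le (E : \bar R) (A B a c : R) : 0 < B -> 0 < c ->
  ((A / B)%:E <= E)%E -> ((a / c)%:E <= E)%E -> (((A + a) / (B + c))%:E <= E)%E.
Proof.
move=> B0 c0; case: E => [e| |] //; last by move=> *; rewrite leey.
by rewrite !lee_fin !ler_pdivrMr //; lra.
Qed.

Lemma ler_ratio (a a' c c' : R) : 0 <= a -> a <= a' -> 0 < c' -> c' <= c -> a / c <= a' / c'.
Proof.
move=> a0 aa' c'0 c'c; apply: (@le_trans _ _ (a / c')).
  by rewrite ler_wpM2l // lef_pV2 ?posrE //; lra.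
by rewrite ler_wpM2r // invr_ge0 ltW.
Qed.

Lemma ratio_sup_mediant_le (S T U : set (R * R)) :
  (forall y, U y -> exists x z,
     [/\ S x, T z, 0 < x.2, 0 < z.2 & y = (x.1 + z.1, x.2 + z.2)]) ->
  (ratio_sup T <= ratio_sup S)%E -> (ratio_sup U <= ratio_sup S)%E.
Proof.
move=> split_U TS; apply: ub_ereal_sup => _ [y Uy <-].
have [x [z [Sx Tz x0 z0 ->]]] := split_U y Uy.
apply: mediant_le => //; first exact: ratio_sup_ub.
exact: le_trans (ratio_sup_ub Tz) TS.
Qed.

Section Shift.
Variable S : set (R * R).
Hypothesis S_pos : forall x, S x -> 0 <= x.1 /\ 0 < x.2.
Hypothesis S_sublinear : sublinear S.

(* Near-optimal points have bounded denominator: with [eps = e / 2] the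
   sublinear bound forces [e * x.2 < 4 * C] once [x.1 / x.2 > 3 e / 4]. *)
Lemma ratio_sup_gap (e d : R) : ratio_sup S = e%:E -> 0 < d ->
  exists2 x, S x & e * x.2 - x.1 < d.
Proof.
move=> Se d0.
have near_sup r : r < e -> exists2 x, S x & r < x.1 / x.2.
  by rewrite -lte_fin -Se => /ereal_sup_gt[_ [x Sx <-]]; rewrite lte_fin; exists x.
clear Se; have [e0|e0] := lerP e 0.
  have [x Sx _] := near_sup (e - 1) ltac:(lra); exists x => //.
  by have [x10 x20] := S_pos Sx; nra.
have [C boundC] := S_sublinear (ltac:(lra) : 0 < e / 2).
pose C1 := Num.max C 1; have C1_ge : C <= C1 /\ 1 <= C1 by rewrite !le_max !lexx ?orbT.
pose eta := Num.min (e / 4) (d * e / (4 * C1)).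
have eta_le : eta <= e / 4 /\ eta <= d * e / (4 * C1) by rewrite !ge_min !lexx ?orbT.
have eta0 : 0 < eta by rewrite lt_min; apply/andP; split; [lra|apply: divr_gt0; nra].
have [x Sx near_opt] := near_sup (e - eta) ltac:(lra); exists x => //.
have [x10 x20] := S_pos Sx.
rewrite ltr_pdivlMr // in near_opt.
have x2_bound : e * x.2 < 4 * C1.
  by have := boundC x Sx; nra.
have : eta * x.2 <= d * e / (4 * C1) * x.2 by apply: ler_wpM2r; lra.
have -> : d * e / (4 * C1) * x.2 = d * (e * x.2 / (4 * C1)) by field; lra.
have : e * x.2 / (4 * C1) < 1 by rewrite ltr_pdivrMr; lra.
nra.
Qed.

Lemma ratio_sup_lt_shift (U : set (R * R)) (a c : R) : 0 < c -> (exists y, U y) ->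
  (forall x, S x -> U (x.1 + a, x.2 + c)) ->
  (ratio_sup S < (a / c)%:E)%E -> (ratio_sup S < ratio_sup U)%E.
Proof.
move=> c0 [y Uy] SU; case Se: (ratio_sup S) => [e| |] //; last first.
  by move=> _; apply: lt_le_trans (ratio_sup_ub Uy); exact: ltNyr.
rewrite lte_fin ltr_pdivlMr // => ec_lt_a.
have [x Sx gap] := ratio_sup_gap (d := a - e * c) Se ltac:(lra).
apply: lt_le_trans (ratio_sup_ub (SU x Sx)).
have [_ x20] := S_pos Sx.
by rewrite lte_fin ltr_pdivlMr /=; lra.
Qed.

End Shift.
End RatioSup.

Section Indicator.
Variables (R : realType) (K : nat).

Lemma xind_ge0 (Psi : {set 'I_K}) k : 0 <= xind R Psi k.
Proof. exact: ler0n. Qed.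

Lemma xind_setU1 (Psi : {set 'I_K}) m k :
  xind R (m |: Psi) k = if k == m then 1 else xind R Psi k.
Proof. by rewrite /xind in_setU1; case: eqP. Qed.

Lemma xind_in (Psi : {set 'I_K}) m : m \in Psi -> xind R Psi m = 1.
Proof. by rewrite /xind => ->. Qed.

Lemma xind_notin (Psi : {set 'I_K}) m : m \notin Psi -> xind R Psi m = 0.
Proof. by rewrite /xind => /negbTE ->. Qed.

Lemma sum_xind_setU1 (Psi : {set 'I_K}) m (F G : 'I_K -> R) :
  m \notin Psi -> (forall k, k != m -> F k = G k) ->
  \sum_k xind R (m |: Psi) k * F k = \sum_k xind R Psi k * G k + F m.
Proof.
move=> mPsi FG; rewrite (bigD1 m) //= [in RHS](bigD1 m) //= xind_setU1 eqxx.
rewrite xind_notin // mul1r mul0r add0r addrC; congr (_ + _).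
by apply: eq_bigr => k km; rewrite xind_setU1 (negbTE km) FG.
Qed.

End Indicator.

Section Problem.
Variables (R : realType) (K N : nat) (s : sys R K N).

Implicit Types (Psi : {set 'I_K}) (m : 'I_K) (p : 'I_N -> R) (pk bk qk wk : 'I_K -> R).

Local Notation gain k := (gkn s k (kp s k)).

Definition P2_values (c1 c4 : bool) (Psi : {set 'I_K}) : set (R * R) :=
  [set x | exists p pk bk qk wk, P2_feasible s c1 c4 Psi p pk bk qk wk /\
     x = (sc_rate s Psi p pk bk, sc_power s Psi p pk qk)].

Definition T_feasible (m : 'I_K) (p b q w : R) : Prop :=
  [/\ 0 <= p, 0 <= b, 0 <= q & 0 <= w] /\
  b + w <= WMC s m /\ RMC s m <= rho (N0 s) w q (hk s m).

Definition T_values (m : 'I_K) : set (R * R) :=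
  [set x | exists p b q w : R, T_feasible m p b q w /\
     x = (rho (N0 s) b p (gain m), p / xi s + q / xi s)].

Lemma EE_P2E c1 c4 Psi : EE_P2 s c1 c4 Psi = ratio_sup (P2_values c1 c4 Psi).
Proof.
rewrite /EE_P2 /ratio_sup; congr ereal_sup; apply/seteqP; split => y.
  by move=> [p [pk [bk [qk [wk [F ->]]]]]]; eexists; first by exists p, pk, bk, qk, wk.
by move=> [_ [p [pk [bk [qk [wk [F ->]]]]]] <-]; exists p, pk, bk, qk, wk.
Qed.

Lemma EE_TE m : EE_T s m = ratio_sup (T_values m).
Proof.
rewrite /EE_T /ratio_sup; congr ereal_sup; apply/seteqP; split => y.
  by move=> [p [b [q [w [H0 [HW [HR ->]]]]]]]; eexists; first by exists p, b, q, w.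
by move=> [_ [p [b [q [w [[H0 [HW HR]] ->]]]]] <-]; exists p, b, q, w.
Qed.

Lemma sc_rate_setU1 Psi m {p} pk bk (pk' bk' : 'I_K -> R) : m \notin Psi ->
  (forall k, k != m -> pk k = pk' k) -> (forall k, k != m -> bk k = bk' k) ->
  sc_rate s (m |: Psi) p pk bk = sc_rate s Psi p pk' bk' + rho (N0 s) (bk m) (pk m) (gain m).
Proof.
move=> mPsi pk_eq bk_eq; rewrite /sc_rate -addrA.
rewrite (sum_xind_setU1 (G := fun k => rho (N0 s) (bk' k) (pk' k) (gain k)) mPsi) //.
by move=> k km; rewrite pk_eq ?bk_eq.
Qed.

Lemma sc_power_setU1 Psi m {p} pk qk (pk' qk' : 'I_K -> R) : m \notin Psi ->
  (forall k, k != m -> pk k = pk' k) -> (forall k, k != m -> qk k = qk' k) ->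
  sc_power s (m |: Psi) p pk qk = sc_power s Psi p pk' qk' + (pk m / xi s + qk m / xi s).
Proof.
move=> mPsi pk_eq qk_eq; rewrite /sc_power.
rewrite (sum_xind_setU1 (G := fun k => pk' k / xi s) mPsi); last by move=> k /pk_eq ->.
rewrite (sum_xind_setU1 (G := fun k => qk' k / xi s) mPsi); last by move=> k /qk_eq ->.
lra.
Qed.

Hypothesis wf : well_formed s.

Let N0_gt0 : 0 < N0 s. Proof. by case: wf => -[]. Qed.
Let xi_gt0 : 0 < xi s. Proof. by case: wf => -[_ []]. Qed.
Let xi_le1 : xi s <= 1. Proof. by case: wf => -[_ []]. Qed.
Let Pc_gt0 : 0 < Pc s. Proof. by case: wf => -[]. Qed.
Let Rmin_ge0 : 0 <= Rmin s. Proof. by case: wf => -[]. Qed.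
Let WMC_gt0 k : 0 < WMC s k. Proof. by case: wf => _ [/(_ k) []]. Qed.
Let RMC_gt0 k : 0 < RMC s k. Proof. by case: wf => _ [/(_ k) []]. Qed.
Let hk_gt0 k : 0 < hk s k. Proof. by case: wf => _ [/(_ k) []]. Qed.
Let gain_gt0 k : 0 < gain k. Proof. by case: wf => _ [/(_ k) [_ _ _ ->]]. Qed.
Let BSC_gt0 n : 0 < BSC s n. Proof. by case: wf => _ [_ /(_ n) []]. Qed.
Let gn_gt0 n : 0 < gn s n. Proof. by case: wf => _ [_ /(_ n) []]. Qed.

Let le_divxi x : 0 <= x -> x <= x / xi s.
Proof. by move=> x0; rewrite ler_pdivlMr // ler_piMr. Qed.

Let divxi_ge0 x : 0 <= x -> 0 <= x / xi s.
Proof. by move=> x0; rewrite divr_ge0 // ltW. Qed.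

Definition rate_bound (eps : R) : R :=
  \sum_n BSC s n * rate_offset (N0 s) eps (gn s n)
  + \sum_k WMC s k * rate_offset (N0 s) eps (gain k).

Section FeasiblePoint.
Variables (c1 c4 : bool) (Psi : {set 'I_K}) (p : 'I_N -> R) (pk bk qk wk : 'I_K -> R).
Hypothesis feas : P2_feasible s c1 c4 Psi p pk bk qk wk.

Lemma sc_rate_ge0 : 0 <= sc_rate s Psi p pk bk.
Proof.
case: feas => p0 [pkbk0 _]; apply: addr_ge0; apply: sumr_ge0 => i _.
  by apply: rho_ge0 => //; apply: ltW.
have [pk0 bk0 _ _] := pkbk0 i.
by apply: mulr_ge0; [exact: xind_ge0 | apply: rho_ge0 => //; apply: ltW].
Qed.

Lemma sc_power_gt0 : 0 < sc_power s Psi p pk qk.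
Proof.
case: feas => p0 [pkqk0 _]; rewrite /sc_power ltr_wpDl //.
apply: addr_ge0; first apply: addr_ge0; apply: sumr_ge0 => i _.
- exact: divxi_ge0.
- by apply: mulr_ge0; [exact: xind_ge0 | apply: divxi_ge0; case: (pkqk0 i)].
- by apply: mulr_ge0; [exact: xind_ge0 | apply: divxi_ge0; case: (pkqk0 i)].
Qed.

Lemma sc_rate_le_linear eps : 0 < eps ->
  sc_rate s Psi p pk bk <= eps * sc_power s Psi p pk qk + rate_bound eps.
Proof.
move=> eps0; case: feas => p0 [pkqk0 [_ [HW _]]].
have rate_n n : rho (N0 s) (BSC s n) (p n) (gn s n)
    <= eps * (p n / xi s) + BSC s n * rate_offset (N0 s) eps (gn s n).
  apply: le_trans (rho_le_linear N0_gt0 (ltW (BSC_gt0 n)) (p0 n) (gn_gt0 n) eps0) _.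
  by rewrite lerD2r ler_wpM2l ?le_divxi //; lra.
have rate_k k : xind R Psi k * rho (N0 s) (bk k) (pk k) (gain k)
    <= eps * (xind R Psi k * (pk k / xi s)) + WMC s k * rate_offset (N0 s) eps (gain k).
  have [pk0 bk0 qk0 wk0] := pkqk0 k.
  have offset0 := rate_offset_ge0 (N0_gt0) eps0 (ltW (gain_gt0 k)).
  have [kPsi|kPsi] := boolP (k \in Psi); last first.
    by rewrite xind_notin // !mul0r mulr0 add0r mulr_ge0 // ltW.
  have := HW k; rewrite xind_in // !mul1r => HWk.
  apply: le_trans (rho_le_linear N0_gt0 bk0 pk0 (gain_gt0 k) eps0) _.
  apply: lerD; first by rewrite ler_wpM2l ?le_divxi //; lra.
  by apply: ler_wpM2r => //; lra.
have rest : 0 <= eps * (\sum_k xind R Psi k * (qk k / xi s) + Pc s).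
  apply: mulr_ge0; first lra; apply: addr_ge0; last exact: ltW.
  apply: sumr_ge0 => k _; apply: mulr_ge0; first exact: xind_ge0.
  by apply: divxi_ge0; case: (pkqk0 k).
have := ler_sum (index_enum _) (P := xpredT) (fun n _ => rate_n n).
have := ler_sum (index_enum _) (P := xpredT) (fun k _ => rate_k k).
rewrite /sc_rate /sc_power /rate_bound !big_split /= -!mulr_sumr.
rewrite !mulrDr; lra.
Qed.

End FeasiblePoint.

Lemma P2_values_pos c1 c4 Psi x : P2_values c1 c4 Psi x -> 0 <= x.1 /\ 0 < x.2.
Proof.
move=> [p [pk [bk [qk [wk [F ->]]]]]].
by split; [exact: sc_rate_ge0 F | exact: sc_power_gt0 F].
Qed.

Lemma P2_values_sublinear c1 c4 Psi : sublinear (P2_values c1 c4 Psi).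
Proof.
move=> eps eps0; exists (rate_bound eps) => _ [p [pk [bk [qk [wk [F ->]]]]]] /=.
exact (sc_rate_le_linear F eps0).
Qed.

Lemma P2_feasible_split c1 Psi m p pk bk qk wk : m \notin Psi ->
  P2_feasible s c1 false (m |: Psi) p pk bk qk wk ->
  P2_feasible s c1 false Psi p [eta pk with m |-> 0] [eta bk with m |-> 0]
    [eta qk with m |-> 0] [eta wk with m |-> 0] /\
  T_feasible m (pk m) (bk m) (qk m) (wk m).
Proof.
move=> mPsi [p0 [pkqk0 [C1 [HW [HR _]]]]]; split; last first.
  have := HW m; have := HR m; rewrite /T_feasible xind_setU1 eqxx !mul1r => -> ->.
  by split; [exact: pkqk0 | rewrite !lexx].
have drop_m (f : 'I_K -> R) : (forall k, 0 <= f k) ->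
    \sum_k [eta f with m |-> 0] k <= \sum_k f k.
  by move=> f0; apply: ler_sum => k _ /=; case: eqVneq.
split => //; split; [|split; [|split; [|split => //]]].
- move=> k /=; case: eqVneq => _; [by rewrite lexx | exact: pkqk0].
- by move=> /C1; apply: le_trans; rewrite !lerD ?drop_m // => k; case: (pkqk0 k).
- move=> k /=; case: eqVneq => [->|km]; first by rewrite xind_notin // mul0r addr0.
  by have := HW k; rewrite xind_setU1 (negbTE km).
- move=> k /=; case: eqVneq => [->|km]; first by rewrite xind_notin // mul0r rho_b0.
  by have := HR k; rewrite xind_setU1 (negbTE km).
Qed.

Lemma P2_feasible_extend c4 Psi m p pk bk qk wk (pm bm qm wm : R) : m \notin Psi ->
  P2_feasible s false c4 Psi p pk bk qk wk ->
  [/\ 0 <= pm, 0 <= bm, 0 <= qm & 0 <= wm] ->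
  bm + wm = WMC s m -> rho (N0 s) wm qm (hk s m) = RMC s m ->
  P2_feasible s false c4 (m |: Psi) p [eta pk with m |-> pm] [eta bk with m |-> bm]
    [eta qk with m |-> qm] [eta wk with m |-> wm].
Proof.
move=> mPsi [p0 [pkqk0 [_ [HW [HR C4]]]]] m0 HWm HRm.
split => //; split; [|split => //; split; [|split]].
- by move=> k /=; case: eqVneq => _; [exact: m0 | exact: pkqk0].
- by move=> k /=; rewrite xind_setU1; case: eqVneq => [->|_]; [rewrite mul1r | exact: HW].
- by move=> k /=; rewrite xind_setU1; case: eqVneq => [->|_]; [rewrite mul1r | exact: HR].
move=> /C4; rewrite (sc_rate_setU1 (pk' := pk) (bk' := bk) mPsi); last 2 first.
- by move=> k /negbTE /= ->.
- by move=> k /negbTE /= ->.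
move=> /le_trans; apply; rewrite /= !eqxx lerDl.
by case: m0 => pm0 bm0 _ _; apply: rho_ge0 => //; exact: ltW.
Qed.

Lemma T_power_gt0 m (p b q w : R) : T_feasible m p b q w -> 0 < p / xi s + q / xi s.
Proof.
move=> [[p0 _ q0 _] [_ HR]]; rewrite ltr_wpDl ?divxi_ge0 // divr_gt0 //.
rewrite lt0r q0 andbT; apply: contraTneq HR => ->.
by rewrite rho_p0 -ltNge.
Qed.

(* Witness: the minimal MU power meeting [RMC s m], with all the remaining
   bandwidth given to the SU link. *)
Lemma T_feasible_tighten m (p b q w : R) : T_feasible m p b q w ->
  exists b' q', [/\ T_feasible m p b' q' w, b' + w = WMC s m,
    rho (N0 s) w q' (hk s m) = RMC s m &
    rho (N0 s) b p (gain m) / (p / xi s + q / xi s)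
      <= rho (N0 s) b' p (gain m) / (p / xi s + q' / xi s)].
Proof.
move=> Tf; have [[p0 b0 q0 w0] [HW HR]] := Tf.
have w_gt0 : 0 < w.
  rewrite lt0r w0 andbT; apply: contraTneq HR => ->.
  by rewrite rho_b0 -ltNge.
pose q' := min_power (N0 s) w (RMC s m) (hk s m).
have HR' : rho (N0 s) w q' (hk s m) = RMC s m by rewrite rho_min_power.
have Tf' : T_feasible m p (WMC s m - w) q' w.
  split; last by rewrite HR' subrK lexx.
  by split => //; [lra | apply: min_power_ge0 => //; exact: ltW].
exists (WMC s m - w), q'; split; rewrite ?subrK //.
apply: ler_ratio; first by apply: rho_ge0 => //; exact: ltW.
- by apply: rho_le_band => //; [lra | exact: ltW].
- exact: T_power_gt0 Tf'.
- by rewrite lerD2l ler_pM2r ?invr_gt0 //; apply: min_power_le.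
Qed.

Lemma P2_values_split c1 Psi m y : m \notin Psi -> P2_values c1 false (m |: Psi) y ->
  exists x z, [/\ P2_values c1 false Psi x, T_values m z, 0 < x.2, 0 < z.2 &
                  y = (x.1 + z.1, x.2 + z.2)].
Proof.
move=> mPsi [p [pk [bk [qk [wk [F ->]]]]]]; have [F' Tf] := P2_feasible_split mPsi F.
exists (sc_rate s Psi p [eta pk with m |-> 0] [eta bk with m |-> 0],
        sc_power s Psi p [eta pk with m |-> 0] [eta qk with m |-> 0]),
  (rho (N0 s) (bk m) (pk m) (gain m), pk m / xi s + qk m / xi s); split.
- by exists p, [eta pk with m |-> 0], [eta bk with m |-> 0], [eta qk with m |-> 0],
    [eta wk with m |-> 0].
- by exists (pk m), (bk m), (qk m), (wk m).
- exact: sc_power_gt0 F'.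
- exact: T_power_gt0 Tf.
by rewrite /= -(sc_rate_setU1 mPsi) -?(sc_power_setU1 mPsi) // => k /negbTE /= ->.
Qed.

Lemma P2_values_extend c4 Psi m (pm bm qm wm : R) x : m \notin Psi ->
  T_feasible m pm bm qm wm -> bm + wm = WMC s m -> rho (N0 s) wm qm (hk s m) = RMC s m ->
  P2_values false c4 Psi x ->
  P2_values false c4 (m |: Psi)
    (x.1 + rho (N0 s) bm pm (gain m), x.2 + (pm / xi s + qm / xi s)).
Proof.
move=> mPsi [m0 _] HWm HRm [p [pk [bk [qk [wk [F ->]]]]]].
have F' := P2_feasible_extend mPsi F m0 HWm HRm.
exists p, [eta pk with m |-> pm], [eta bk with m |-> bm], [eta qk with m |-> qm],
  [eta wk with m |-> wm]; split => //.
rewrite (sc_rate_setU1 (pk' := pk) (bk' := bk) mPsi)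
  ?(sc_power_setU1 (pk' := pk) (qk' := qk) mPsi).
  by rewrite /= !eqxx.
all: by move=> k /negbTE /= ->.
Qed.

(* Witness: the bandwidth of every served MU is split evenly, with the minimal
   powers meeting [RMC] on the MU link and [Rmin] on each SU link. *)
Lemma P2_values_nonempty c4 Psi m : m \in Psi -> exists x, P2_values false c4 Psi x.
Proof.
move=> mPsi; pose half k := xind R Psi k * (WMC s k / 2).
pose pow r h k := min_power (N0 s) (WMC s k / 2) (r k) (h k).
have half_ge0 k : 0 <= half k by rewrite mulr_ge0 ?xind_ge0 // divr_ge0 // ltW.
have pow_ge0 (r h : 'I_K -> R) k : 0 <= r k -> 0 < h k -> 0 <= pow r h k.
  by move=> r0 h0; apply: min_power_ge0 => //; rewrite divr_gt0.
have rho_pow (r h : 'I_K -> R) k : 0 < h k ->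
    rho (N0 s) (half k) (pow r h k) (h k) = xind R Psi k * r k.
  move=> h0; have [kPsi|kPsi] := boolP (k \in Psi).
    by rewrite /half xind_in // !mul1r rho_min_power // divr_gt0.
  by rewrite /half xind_notin // !mul0r rho_b0.
eexists; exists (fun=> 0), (pow (fun=> Rmin s) (fun k => gain k)), half,
  (pow (RMC s) (hk s)), half; split; last reflexivity.
split => //; split; [|split => //; split; [|split]].
- move=> k; split; rewrite ?half_ge0 //.
    exact: pow_ge0 Rmin_ge0 (gain_gt0 k).
  exact: pow_ge0 (ltW (RMC_gt0 k)) (hk_gt0 k).
- by move=> k; rewrite /half; lra.
- by move=> k; rewrite rho_pow.
move=> _; rewrite /sc_rate big1 ?add0r => [|n _]; last exact: rho_p0.
under eq_bigr do rewrite rho_pow //.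
rewrite (bigD1 m) //= xind_in // !mul1r lerDl sumr_ge0 // => k _.
by rewrite !mulr_ge0 ?xind_ge0.
Qed.

Lemma EE_P2_setU1_le c1 Psi m : m \notin Psi ->
  (EE_T s m <= EE_P2 s c1 false Psi)%E ->
  (EE_P2 s c1 false (m |: Psi) <= EE_P2 s c1 false Psi)%E.
Proof.
rewrite !EE_P2E EE_TE => mPsi.
by apply: ratio_sup_mediant_le => y /(P2_values_split mPsi).
Qed.

Lemma EE_P2_setU1_gt c4 Psi m : m \notin Psi ->
  (EE_P2 s false c4 Psi < EE_T s m)%E ->
  (EE_P2 s false c4 Psi < EE_P2 s false c4 (m |: Psi))%E.
Proof.
rewrite !EE_P2E EE_TE => mPsi /ereal_sup_gt[_ [_ [p [b [q [w [Tf ->]]]]] <-]] lt_T.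
have [b' [q' [Tf' HW HR le_ratio]]] := T_feasible_tighten Tf.
apply: (ratio_sup_lt_shift (@P2_values_pos false c4 Psi)
  (P2_values_sublinear false c4 Psi) (T_power_gt0 Tf')).
- exact: P2_values_nonempty (setU11 m Psi).
- by move=> x; exact: P2_values_extend mPsi Tf' HW HR.
- by apply: lt_le_trans lt_T _; rewrite lee_fin.
Qed.

End Problem.

Unset Implicit Arguments.
Local Open Scope ereal_scope.

Theorem theorem4 (R : realType) (K N : nat) (s : sys R K N)
    (Psi : {set 'I_K}) (m : 'I_K) :
  well_formed s -> m \notin Psi ->
  [/\ (* (1) C1 and C4 removed *)
      (EE_P2 s false false Psi < EE_P2 s false false (m |: Psi)
         <-> EE_P2 s false false Psi < EE_T s m),
      (* (2) C1 removed, C4 kept *)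
      (EE_P2 s false true Psi < EE_T s m ->
         EE_P2 s false true Psi < EE_P2 s false true (m |: Psi))
    & (* (3) C4 removed, C1 kept *)
      (EE_P2 s true false Psi < EE_P2 s true false (m |: Psi) ->
         EE_P2 s true false Psi < EE_T s m)].
Proof.
move=> wf mPsi.
have only_if c1 : EE_P2 s c1 false Psi < EE_P2 s c1 false (m |: Psi) ->
    EE_P2 s c1 false Psi < EE_T s m.
  by rewrite !ltNge; apply: contra; exact: EE_P2_setU1_le.
have if_part c4 := @EE_P2_setU1_gt R K N s wf c4 Psi m mPsi.
by split; [split; [exact: only_if | exact: if_part] | exact: if_part | exact: only_if].
Qed.
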